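(* Let $m\ge3$ and consider a hypergraph PIN model on a $t$-uniform hypergraph $\mathcal H=(\mathcal M,\mathcal E)$. Let $\Omega=\{B\subset\mathcal M:1\le|B|\le m-2\}$. The singleton partition $\mathcal S$ is (a) a minimizer of $\Delta$ if and only if $$\frac{(t-1)|\mathcal E|}{m-1}\le\frac{\sum_{e\in\mathcal E}[P_B(e)-1]}{|\mathcal P_B|-1}\quad\text{for all } B\in\Omega;$$ (b) the unique minimizer of $\Delta$ if and only if the same inequalities hold strictly for all $B\in\Omega$.
   Context: Let $\mathcal M=\{1,\dots,m\}$. A hypergraph PIN model on $\mathcal H=(\mathcal M,\mathcal E)$, with $\mathcal E$ a finite multiset of subsets of $\mathcal M$, is defined as follows. Let $\mathcal E^{(n)}$ contain $n$ copies of each element of $\mathcal E$. Independent Bernoulli(1/2) variables $\xi_e$ are attached to the $e\in\mathcal E^{(n)}$, and $X^n_i=(\xi_e:e\in\mathcal E^{(n)},\ i\in e)$. The single-letter source $X_{\mathcal M}$ corresponds to $n=1$. $\mathcal H$ is $t$-uniform if every hyperedge has $t$ elements. Entropies are base 2. $\Delta(\mathcal P)=\frac1{|\mathcal P|-1}[\sum_{A\in\mathcal P}H(X_A)-H(X_{\mathcal M})]$ for partitions with at least 2 cells, where $X_A=(X_i:i\in A)$. $\mathcal S=\{\{1\},\dots,\{m\}\}$. For nonempty $B=\{b_1,\dots,b_{|B|}\}\subsetneq\mathcal M$, $\mathcal P_B=\{B^c,\{b_1\},\dots,\{b_{|B|}\}\}$, and $P_B(e)$ is the number of cells of $\mathcal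 P_B$ that intersect the hyperedge $e$. *)

From Stdlib Require Import Reals.
From mathcomp Require Import all_boot.
Local Open Scope R_scope.

Definition rsum (s : seq R) : R := foldr Rplus R0 s.

Definition log2 (x : R) : R := (ln x / ln 2).

(* Shannon entropy (base 2) of a random variable f : Om -> V, where Om is a
   finite probability space with the uniform distribution:
   H(f) = sum over values v of f of  - p(v) log2 p(v),  p(v) = P[f = v]. *)
Definition entropy {Om : finType} {V : eqType} (f : Om -> V) : R :=
  rsum [seq (let p := (INR (count (fun w => f w == v) (enum Om)) / INR #|Om|)
             in - (p * log2 p))
       | v <- undup [seq f w | w <- enum Om]].

(* Hypergraph PIN model (single letter, n = 1).  Vertex set M = 'I_m,
   hyperedge multiset E : seq {set 'I_m}; hyperedge number k carries the
   independent uniform bit w k, for w in the uniform space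
   {ffun 'I_(size E) -> bool}. *)
Definition outcome {m : nat} (E : seq {set 'I_m}) := {ffun 'I_(size E) -> bool}.

(* X_i = (xi_e : e in E, i in e), recorded position-wise. *)
Definition Xi {m : nat} (E : seq {set 'I_m}) (i : 'I_m) (w : outcome E)
  : {ffun 'I_(size E) -> option bool} :=
  [ffun k : 'I_(size E) => if i \in nth set0 E k then Some (w k) else None].

Definition XA {m : nat} (E : seq {set 'I_m}) (A : {set 'I_m}) (w : outcome E)
  : {ffun 'I_m -> option {ffun 'I_(size E) -> option bool}} :=
  [ffun i : 'I_m => if i \in A then Some (Xi E i w) else None].

Definition HX {m : nat} (E : seq {set 'I_m}) (A : {set 'I_m}) : R := entropy (XA E A).

Definition Delta {m : nat} (E : seq {set 'I_m}) (P : {set {set 'I_m}}) : R :=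
  ((rsum [seq HX E A | A <- enum P] - HX E setT) / (INR #|P| - 1)).

Definition admissible {m : nat} (P : {set {set 'I_m}}) : bool :=
  partition P [set: 'I_m] && (1 < #|P|)%N.

Definition minimizer {m : nat} (E : seq {set 'I_m}) (P : {set {set 'I_m}}) : Prop :=
  admissible P /\ forall Q, admissible Q -> Rle (Delta E P) (Delta E Q).

Definition unique_minimizer {m : nat} (E : seq {set 'I_m}) (P : {set {set 'I_m}}) : Prop :=
  minimizer E P /\ forall Q, minimizer E Q -> Q = P.

Definition singletons {m : nat} : {set {set 'I_m}} := [set [set i] | i : 'I_m].

Definition PB {m : nat} (B : {set 'I_m}) : {set {set 'I_m}} :=
  [set ~: B] :|: [set [set b] | b in B].

Definition PBcount {m : nat} (B : {set 'I_m}) (e : {set 'I_m}) : nat :=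
  #|[set C in PB B | C :&: e != set0]|.

Definition lhs {m : nat} t (E : seq {set 'I_m}) : R :=
  ((INR t - 1) * INR (size E) / (INR m - 1)).

Definition rhs {m : nat} (E : seq {set 'I_m}) (B : {set 'I_m}) : R :=
  (rsum [seq (INR (PBcount B e) - 1) | e <- E] / (INR #|PB B| - 1)).

(** The bits of the model are independent and uniform, so [H(X_A)] is the number of
    hyperedges meeting [A], and [Delta P = (N P - |E|) / (|P| - 1)], where [N P] counts the
    pairs (cell of [P], hyperedge) that meet.  For a partition [Q] and each cell [C], the
    partition [P_(C^c)] keeps [C] and splits [C^c] into singletons; counting incidences gives
    [sum_(C in Q) N P_(C^c) + N S = N Q + |Q| N S], which rearranges into
      [(|Q| - 1) (Delta Q - Delta S) = sum_(C in Q) |C^c| (Delta P_(C^c) - Delta S)].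
    A singleton cell contributes nothing since then [P_(C^c) = S], while the complement of a
    larger cell lies in [Omega].  Hence [Delta S <= Delta P_B] on [Omega] gives
    [Delta S <= Delta Q] for every [Q], strictly as soon as [Q <> S]; conversely each [P_B]
    with [B] in [Omega] is itself a partition different from [S]. *)

From Pilot Require Import Defs.
From Stdlib Require Import Reals.
From mathcomp Require Import all_boot all_algebra.
From mathcomp Require Import Rstruct ring lra zify.

Set Implicit Arguments.
Unset Strict Implicit.
Unset Printing Implicit Defensive.

(* A bare [Order] would resolve to the module of the classical library loaded by [Rstruct]. *)
Import order.Order.TTheory GRing.Theory Num.Theory.

Lemma card_agree_on (n : nat) (K : {set 'I_n}) (w : {ffun 'I_n -> bool}) :
  #|[pred w' : {ffun 'I_n -> bool} | [forall k in K, w' k == w k]]| = 2 ^ (n - #|K|).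
Proof.
pose F k := if k \in K then pred1 (w k) else predT.
rewrite (eq_card (B := family F)); last first.
  move=> w'; rewrite inE; apply/forall_inP/familyP => agree k.
    by rewrite /F; case: ifP => // /agree /eqP ->; rewrite inE.
  by move=> kK; have := agree k; rewrite /F kK inE.
rewrite card_family foldrE big_map big_enum /= (bigID (mem K)) /=.
rewrite big1 => [|k kK]; last by rewrite /F kK card1.
rewrite mul1n (eq_bigr (fun=> 2)) => [|k /negbTE kK]; last by rewrite /F kK card_bool.
rewrite prod_nat_const (eq_card (B := ~: K)) => [|k]; last by rewrite inE.
by rewrite cardsCs setCK card_ord.
Qed.

Definition edges_meeting {m : nat} (E : seq {set 'I_m}) (A : {set 'I_m}) : {set 'I_(size E)} :=
  [set k : 'I_(size E) | A :&: nth set0 E k != set0].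

Lemma XA_eqE m (E : seq {set 'I_m}) (A : {set 'I_m}) (w w' : outcome E) :
  (XA E A w' == XA E A w) = [forall k in edges_meeting E A, w' k == w k].
Proof.
apply/eqP/forall_inP => [/ffunP XAw k | agree].
  rewrite inE => /set0Pn [i /setIP [iA ik]].
  by have := XAw i; rewrite !ffunE iA => -[/ffunP /(_ k)]; rewrite !ffunE ik => -[->].
apply/ffunP => i; rewrite !ffunE; case: ifP => // iA; congr Some.
apply/ffunP => k; rewrite !ffunE; case: ifP => // ik; congr Some.
by apply/eqP/agree; rewrite inE; apply/set0Pn; exists i; apply/setIP.
Qed.

Lemma partition_set1 (T : finType) (A : {set T}) : partition [set [set x] | x in A] A.
Proof.
have [] := @indexed_partition _ _ A set1 _ _.
- by move=> i j _ _ ji; rewrite disjoints1 inE eq_sym.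
- by move=> i _; apply/set0Pn; exists i; rewrite inE.
move=> + _; rewrite cover_imset; congr partition; apply/setP => x.
by apply/bigcupP/idP => [[y yA]|xA]; [rewrite inE => /eqP -> | exists x; rewrite ?inE].
Qed.

Section Partitions.

Variable m : nat.
Implicit Types (B C : {set 'I_m}) (Q : {set {set 'I_m}}).

Lemma singletonsE : singletons = [set [set i] | i in [set: 'I_m]].
Proof. by apply/setP => C; apply/imsetP/imsetP => -[i _ ->]; exists i. Qed.

Lemma card_singletons : #|@singletons m| = m.
Proof. by rewrite card_imset ?card_ord //; exact: set1_inj. Qed.

Lemma admissible_singletons : 1 < m -> admissible (@singletons m).
Proof. by rewrite /admissible card_singletons singletonsE partition_set1 => ->. Qed.

Lemma setC_notin_PB_singletons B : ~: B \notin [set [set b] | b in B].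
Proof. by apply/imsetP => -[b bB /setP /(_ b)]; rewrite !inE bB eqxx. Qed.

Lemma card_PB B : #|PB B| = #|B| + 1.
Proof.
by rewrite cardsU1 setC_notin_PB_singletons card_imset; [exact: addnC | exact: set1_inj].
Qed.

Lemma admissible_PB B : B != set0 -> ~: B != set0 -> admissible (PB B).
Proof.
move=> B0 BC0; rewrite /admissible card_PB addn1 ltnS card_gt0 B0 andbT.
rewrite -(setUCr B) setUC /PB; apply: partitionU1 => //; first exact: partition_set1.
by rewrite disjoint_sym disjoints_subset setCK.
Qed.

Lemma PB_setC_card1 C : #|C| = 1 -> PB (~: C) = singletons.
Proof.
move/eqP/cards1P=> [i ->]; apply/setP => D; rewrite /PB setCK !inE.
apply/idP/imsetP => [/orP[/eqP ->|/imsetP[j _ ->]]|]; [by exists i | by exists j |].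
move=> [j _ ->]; case: (eqVneq j i) => [->|ji]; first by rewrite eqxx.
by apply/orP; right; apply: imset_f; rewrite !inE.
Qed.

Lemma card_setC B : #|~: B| = m - #|B|.
Proof. by rewrite cardsCs setCK card_ord. Qed.

Lemma PB_neq_singletons B : 1 < #|~: B| -> PB B != singletons.
Proof.
move=> BC_gt1; apply/eqP => PBS; have : ~: B \in PB B by rewrite !inE eqxx.
by rewrite PBS => /imsetP [i _ BCi]; move: BC_gt1; rewrite BCi cards1.
Qed.
End Partitions.

Lemma card_set_sum (T : finType) (p : pred T) : #|[set x | p x]| = \sum_x p x.
Proof. by rewrite -sum1dep_card big_mkcond; apply: eq_bigr => x _; case: (p x). Qed.

Definition cells_meeting {m : nat} (P : {set {set 'I_m}}) (e : {set 'I_m}) : nat :=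
  #|[set C in P | C :&: e != set0]|.

Definition incidence_count {m : nat} (E : seq {set 'I_m}) (P : {set {set 'I_m}}) : nat :=
  \sum_(e <- E) cells_meeting P e.

Lemma cells_meeting_sum m (P : {set {set 'I_m}}) e :
  cells_meeting P e = \sum_(C in P) (C :&: e != set0).
Proof.
by rewrite /cells_meeting card_set_sum [RHS]big_mkcond; apply: eq_bigr => C _; case: (C \in P).
Qed.

Lemma card_partition_setI (T : finType) (Q : {set {set T}}) (D e : {set T}) :
  partition Q D -> #|D :&: e| = \sum_(C in Q) #|C :&: e|.
Proof.
move=> partQ; rewrite -sum1_card (eq_bigl (fun x => (x \in D) && (x \in e))) => [|x]; last first.
  by rewrite inE.
rewrite (set_partition_big_cond _ partQ); apply: eq_bigr => C _.
by rewrite -sum1_card; apply: eq_bigl => x; rewrite inE.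
Qed.

Section Incidences.

Variable m : nat.
Implicit Types (B C e : {set 'I_m}) (Q : {set {set 'I_m}}).

Lemma set1I_neq0 (i : 'I_m) e : ([set i] :&: e != set0) = (i \in e).
Proof. by rewrite setI_eq0 disjoints1 negbK. Qed.

Lemma cells_meeting_singletons e : cells_meeting singletons e = #|e|.
Proof.
rewrite cells_meeting_sum big_imset /=; last by move=> i j _ _; exact: set1_inj.
under eq_bigr do rewrite set1I_neq0.
by rewrite -sum1_card big_mkcond [RHS]big_mkcond; apply: eq_bigr => i _; case: (i \in e).
Qed.

Lemma cells_meeting_PB B e :
  cells_meeting (PB B) e = (~: B :&: e != set0) + #|B :&: e|.
Proof.
rewrite cells_meeting_sum big_setU1 ?setC_notin_PB_singletons //=.
rewrite big_imset /=; last by move=> i j _ _; exact: set1_inj.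
congr (_ + _); under eq_bigr do rewrite set1I_neq0.
rewrite -sum1_card big_mkcond [RHS]big_mkcond; apply: eq_bigr => i _.
by rewrite inE; case: (i \in B).
Qed.

Lemma sum_cells_meeting_PB_setC Q e : partition Q [set: 'I_m] ->
  \sum_(C in Q) cells_meeting (PB (~: C)) e + #|e| = cells_meeting Q e + #|Q| * #|e|.
Proof.
move=> partQ; under eq_bigr do rewrite cells_meeting_PB setCK.
rewrite big_split /= -cells_meeting_sum -addnA; congr (_ + _).
have := card_partition_setI e partQ; rewrite setTI => {1}->.
rewrite -big_split /= -sum_nat_const; apply: eq_bigr => C _.
by rewrite addnC -(cardsID C e) setDE (setIC e C) (setIC e (~: C)).
Qed.

Lemma incidence_count_PB_setC (E : seq {set 'I_m}) Q : partition Q [set: 'I_m] ->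
  \sum_(C in Q) incidence_count E (PB (~: C)) + incidence_count E singletons
  = incidence_count E Q + #|Q| * incidence_count E singletons.
Proof.
move=> partQ; rewrite /incidence_count exchange_big big_distrr -!big_split /=.
by apply: eq_bigr => e _; rewrite cells_meeting_singletons sum_cells_meeting_PB_setC.
Qed.

Lemma admissible_setC_cell Q C : admissible Q -> C \in Q -> ~: C != set0.
Proof.
case/andP=> partQ; rewrite (cardsD1 C) => + CQ; rewrite CQ ltnS card_gt0.
case/set0Pn=> D /setD1P [DC DQ]; have /set0Pn [x xD] := partition_neq0 partQ DQ.
apply/set0Pn; exists x; rewrite inE; apply: contra DC => xC.
have trivQ := partition_trivIset partQ.
by rewrite -(def_pblock trivQ DQ xD) (def_pblock trivQ CQ xC).
Qed.

Lemma eq_singletons Q : partition Q [set: 'I_m] -> {in Q, forall C, #|C| <= 1} -> Q = singletons.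
Proof.
move=> partQ small; have cell1 : {in Q, forall C, #|C| = 1}.
  by move=> C CQ; apply/eqP; rewrite eqn_leq small // card_gt0 (partition_neq0 partQ).
have := card_partition partQ; rewrite cardsT card_ord (eq_bigr _ cell1) sum1_card.
move=> cardQ; apply/eqP; rewrite eqEcard card_singletons -cardQ leqnn andbT.
by apply/subsetP => C /cell1 /eqP /cards1P [i ->]; apply: imset_f.
Qed.
End Incidences.

Local Open Scope ring_scope.

Lemma rsumE (s : seq R) : rsum s = \sum_(x <- s) x.
Proof. by elim: s => [|x s IH]; rewrite ?big_nil ?big_cons //= IH. Qed.

Lemma log2_expn n : log2 (2 ^ n)%:R = n%:R.
Proof.
have ln2_gt0 : 0 < ln 2.
  have /RltP two_gt1 : 1 < 2 :> R by lra.
  by have := ln_increasing _ _ Rlt_0_1 two_gt1; rewrite ln_1 => /RltP.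
rewrite /log2 natrX -RpowE ln_pow; last by apply/RltP; rewrite ltr0n.
by rewrite INRE RdivE RmultE mulfK //; exact: lt0r_neq0.
Qed.

Lemma count_enum (T : finType) (P : pred T) : count P (enum T) = #|P|.
Proof. by rewrite cardE -size_filter enumT. Qed.

Lemma entropy_equal_fibers (Om : finType) (V : eqType) (f : Om -> V) (c k : nat) :
  (0 < c)%N -> (0 < k)%N -> (forall w, #|[pred w' | f w' == f w]| = c) ->
  #|Om| = (c * k)%N -> entropy f = log2 k%:R.
Proof.
move=> c_gt0 k_gt0 fiberE cardOm.
set s := [seq f w | w <- enum Om].
have count_fiber v : v \in undup s -> count (fun w => f w == v) (enum Om) = c.
  by rewrite mem_undup => /mapP [w _ ->]; rewrite count_enum -(fiberE w).
have size_values : size (undup s) = k.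
  have := perm_size (perm_count_undup s).
  rewrite size_map -cardE cardOm size_flatten /shape -map_comp.
  set sizes := map _ _.
  have /all_pred1P -> : all (pred1 c) sizes.
    apply/allP => _ /mapP [v /count_fiber <- ->].
    by rewrite /= size_nseq count_map.
  by rewrite size_map sumn_nseq => /eqP; rewrite eqn_pmul2l // => /eqP.
have kR_gt0 : 0 < k%:R :> R by rewrite ltr0n.
rewrite /entropy rsumE big_map (eq_big_seq (fun=> - (k%:R^-1 * log2 k%:R^-1))); last first.
  move=> v /count_fiber /=; rewrite !INRE cardOm natrM RdivE RmultE RoppE => ->.
  by rewrite invfM mulVKf // pnatr_eq0 -lt0n.
rewrite big_const_seq count_predT iter_addr_0 size_values /log2 -RinvE ln_Rinv.
  by rewrite RinvE RdivE RoppE mulNr mulrN opprK -mulrnAl -mulr_natr mulVf ?mul1r ?lt0r_neq0.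
by apply/RltP.
Qed.

Lemma HX_edges_meeting m (E : seq {set 'I_m}) (A : {set 'I_m}) :
  HX E A = #|edges_meeting E A|%:R.
Proof.
set a := #|edges_meeting E A|.
have a_le : (a <= size E)%N by rewrite -[X in (_ <= X)%N]card_ord max_card.
rewrite /HX (@entropy_equal_fibers _ _ _ (2 ^ (size E - a)) (2 ^ a)) ?log2_expn ?expn_gt0 //.
  by move=> w; rewrite -(card_agree_on _ w); apply: eq_card => w'; rewrite !inE XA_eqE.
by rewrite card_ffun card_bool card_ord -expnD subnK.
Qed.

Lemma sum_HX_cells m (E : seq {set 'I_m}) (P : {set {set 'I_m}}) :
  \sum_(A in P) HX E A = (incidence_count E P)%:R.
Proof.
under eq_bigr do rewrite HX_edges_meeting card_set_sum.
rewrite -natr_sum exchange_big /incidence_count (big_nth set0) big_mkord.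
by congr _%:R; apply: eq_bigr => k _; rewrite cells_meeting_sum.
Qed.

Lemma HX_setT m (E : seq {set 'I_m}) : set0 \notin E -> HX E [set: 'I_m] = (size E)%:R.
Proof.
move=> E_nonempty; rewrite HX_edges_meeting -[in RHS](card_ord (size E)) -cardsT.
congr _%:R; apply: eq_card => k; rewrite !inE setTI.
by apply: contraNneq E_nonempty => <-; exact: mem_nth.
Qed.

Lemma DeltaE m (E : seq {set 'I_m}) (P : {set {set 'I_m}}) : set0 \notin E ->
  Defs.Delta E P = ((incidence_count E P)%:R - (size E)%:R) / (#|P|%:R - 1).
Proof.
move=> E_nonempty; rewrite /Defs.Delta rsumE big_map big_enum /= sum_HX_cells HX_setT //.
by rewrite INRE RdivE !RminusE.
Qed.

Section Decomposition.

Variables (m : nat) (E : seq {set 'I_m}).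
Hypotheses (m_gt1 : (1 < m)%N) (E_nonempty : set0 \notin E).
Implicit Types (B C : {set 'I_m}) (P Q : {set {set 'I_m}}).

Local Notation Delta := (Defs.Delta E).
Local Notation N P := ((incidence_count E P)%:R : R).

Lemma mulr_Delta P : (1 < #|P|)%N -> (#|P|%:R - 1) * Delta P = N P - (size E)%:R.
Proof.
by move=> P_gt1; rewrite DeltaE // mulrC divfK // subr_eq0 pnatr_eq1 gtn_eqF.
Qed.

Lemma Delta_decomposition Q : admissible Q ->
  (#|Q|%:R - 1) * (Delta Q - Delta singletons)
  = \sum_(C in Q) #|~: C|%:R * (Delta (PB (~: C)) - Delta singletons).
Proof.
move=> /[dup] admQ /andP [partQ Q_gt1]; set d := Delta singletons.
have NS : N singletons = (m%:R - 1) * d + (size E)%:R.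
  by have := @mulr_Delta singletons; rewrite card_singletons => /(_ m_gt1) ->; rewrite subrK.
have NQ : N Q = (#|Q|%:R - 1) * Delta Q + (size E)%:R by rewrite mulr_Delta ?subrK.
have NC C : C \in Q -> #|~: C|%:R * Delta (PB (~: C)) = N (PB (~: C)) - (size E)%:R.
  move=> CQ; rewrite -mulr_Delta card_PB ?natrD ?addrK // addn1 ltnS card_gt0.
  exact: admissible_setC_cell admQ CQ.
have sum_weights : \sum_(C in Q) #|~: C|%:R = (#|Q|%:R - 1) * m%:R :> R.
  have : (\sum_(C in Q) #|~: C| + m = #|Q| * m)%N.
    rewrite [X in (_ + X)%N](_ : m = \sum_(C in Q) #|C|); last first.
      by rewrite -(card_partition partQ) cardsT card_ord.
    rewrite -big_split -sum_nat_const; apply: eq_bigr => C _.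
    by rewrite /= addnC cardsC card_ord.
  move/(congr1 (fun n : nat => n%:R : R)); rewrite /= natrD natrM natr_sum => sumE.
  by rewrite mulrBl mul1r -sumE addrK.
have sumN : \sum_(C in Q) N (PB (~: C)) = N Q + (#|Q|%:R - 1) * N singletons.
  have := congr1 (fun n : nat => n%:R : R) (incidence_count_PB_setC E partQ).
  rewrite /= natrD natrD natrM natr_sum => /(congr1 (fun x => x - N singletons)).
  by rewrite addrK => ->; rewrite mulrBl mul1r addrA.
under eq_bigr => C CQ do rewrite mulrBr NC //.
rewrite sumrB -mulr_suml sum_weights sumrB sumN sumr_const NQ NS -mulr_natl.
ring.
Qed.

Lemma setC_cell_mid_size Q C : admissible Q -> C \in Q -> (1 < #|C|)%N ->
  (1 <= #|~: C| <= m - 2)%N.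
Proof.
move=> admQ CQ C_gt1; have := admissible_setC_cell admQ CQ.
by rewrite -card_gt0 card_setC => ?; apply/andP; split; lia.
Qed.

Lemma Delta_PB_setC_cell_ge Q C : admissible Q -> C \in Q ->
  (forall B, (1 <= #|B| <= m - 2)%N -> Delta singletons <= Delta (PB B)) ->
  Delta singletons <= Delta (PB (~: C)).
Proof.
move=> admQ CQ dle; case: (ltnP 1 #|C|) => [C_gt1 | C_le1].
  exact/dle/(setC_cell_mid_size admQ).
have C_gt0 : (0 < #|C|)%N by rewrite card_gt0 (partition_neq0 (proj1 (andP admQ))).
by rewrite PB_setC_card1 //; apply/eqP; rewrite eqn_leq C_le1.
Qed.

Lemma Delta_singletons_le Q : admissible Q ->
  (forall B, (1 <= #|B| <= m - 2)%N -> Delta singletons <= Delta (PB B)) ->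
  Delta singletons <= Delta Q.
Proof.
move=> admQ dle; have Q_gt1 : 1 < #|Q|%:R :> R by rewrite ltr1n; case/andP: admQ.
have : 0 <= (#|Q|%:R - 1) * (Delta Q - Delta singletons).
  rewrite Delta_decomposition //; apply: sumr_ge0 => C CQ.
  by rewrite mulr_ge0 ?ler0n // subr_ge0 (Delta_PB_setC_cell_ge admQ CQ).
by rewrite pmulr_rge0 ?subr_ge0 ?subr_gt0.
Qed.

Lemma Delta_singletons_lt Q : admissible Q -> Q != singletons ->
  (forall B, (1 <= #|B| <= m - 2)%N -> Delta singletons < Delta (PB B)) ->
  Delta singletons < Delta Q.
Proof.
move=> admQ QS dlt; have Q_gt1 : 1 < #|Q|%:R :> R by rewrite ltr1n; case/andP: admQ.
have dle B (mid : (1 <= #|B| <= m - 2)%N) := ltW (dlt B mid).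
have [C0 C0Q C0_gt1] : exists2 C0, C0 \in Q & (1 < #|C0|)%N.
  apply/exists_inP; apply: contraR QS; rewrite negb_exists_in => /forall_inP small.
  by apply/eqP/eq_singletons => [|C /small]; [case/andP: admQ | rewrite -leqNgt].
have : 0 < (#|Q|%:R - 1) * (Delta Q - Delta singletons).
  rewrite Delta_decomposition // (bigD1 C0) //=; apply: ltr_pwDl.
    rewrite mulr_gt0 ?ltr0n ?card_gt0 ?(admissible_setC_cell admQ C0Q) //.
    by rewrite subr_gt0 dlt // (setC_cell_mid_size admQ C0Q C0_gt1).
  apply: sumr_ge0 => C /andP [CQ _].
  by rewrite mulr_ge0 ?ler0n // subr_ge0 (Delta_PB_setC_cell_ge admQ CQ).
by rewrite pmulr_rgt0 ?subr_gt0.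
Qed.

Lemma minimizer_singletonsP :
  minimizer E singletons <->
  (forall B, (1 <= #|B| <= m - 2)%N -> Delta singletons <= Delta (PB B)).
Proof.
split=> [[_ dmin] B mid | dle].
  apply/RleP; apply: dmin; rewrite admissible_PB // -card_gt0 ?card_setC; lia.
split=> [|Q admQ]; first exact: admissible_singletons.
by apply/RleP; exact: Delta_singletons_le.
Qed.

Lemma unique_minimizer_singletonsP :
  unique_minimizer E singletons <->
  (forall B, (1 <= #|B| <= m - 2)%N -> Delta singletons < Delta (PB B)).
Proof.
split=> [[[_ dmin] Smin] B mid | dlt].
  rewrite ltNge; apply/negP => /RleP PB_le.
  have PB_min : minimizer E (PB B).
    split=> [|Q admQ]; last exact: Rle_trans PB_le (dmin Q admQ).
    by rewrite admissible_PB // -card_gt0 ?card_setC; lia.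
  suff : PB B != singletons by rewrite (Smin _ PB_min) eqxx.
  by apply: PB_neq_singletons; rewrite card_setC; lia.
have minS : minimizer E singletons.
  by apply/minimizer_singletonsP => B mid; exact/ltW/dlt.
split=> // Q [admQ Qmin]; apply/eqP; apply: contraT => QS.
have /RleP := Qmin _ (proj1 minS); rewrite leNgt.
by rewrite (Delta_singletons_lt admQ QS dlt).
Qed.

Lemma lhs_uniform t : all (fun e : {set 'I_m} => #|e| == t) E -> lhs t E = Delta singletons.
Proof.
move=> /allP uniformE; rewrite DeltaE // card_singletons /incidence_count natr_sum.
under eq_big_seq => e /uniformE /eqP e_t do rewrite cells_meeting_singletons e_t.
rewrite big_const_seq count_predT iter_addr_0 /lhs !INRE RdivE RmultE !RminusE.
by rewrite R1E mulrBl mul1r mulr_natr.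
Qed.

Lemma rhs_Delta B : rhs E B = Delta (PB B).
Proof.
rewrite /rhs DeltaE // rsumE big_map; under eq_bigr do rewrite INRE.
rewrite sumrB /incidence_count natr_sum big_const_seq count_predT iter_addr_0.
by rewrite INRE RdivE !RminusE R1E.
Qed.

End Decomposition.

Local Close Scope ring_scope.

Theorem corollary2 (m t : nat) (E : seq {set 'I_m}) :
  3 <= m -> 0 < t -> all (fun e : {set 'I_m} => #|e| == t) E ->
  (minimizer E (@singletons m) <->
     (forall B : {set 'I_m}, 1 <= #|B| <= m - 2 -> Rle (lhs t E) (rhs E B)))
  /\
  (unique_minimizer E (@singletons m) <->
     (forall B : {set 'I_m}, 1 <= #|B| <= m - 2 -> Rlt (lhs t E) (rhs E B))).
Proof.
move=> m_ge3 t_gt0 uniformE; have m_gt1 : 1 < m by apply: leq_trans m_ge3.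
have E_nonempty : set0 \notin E.
  by apply: contraTN t_gt0 => /(allP uniformE); rewrite cards0 eq_sym => /eqP ->.
have rhs_le B : Rle (lhs t E) (rhs E B) <-> (Defs.Delta E singletons <= Defs.Delta E (PB B))%R.
  by rewrite lhs_uniform // rhs_Delta //; split => /RleP.
have rhs_lt B : Rlt (lhs t E) (rhs E B) <-> (Defs.Delta E singletons < Defs.Delta E (PB B))%R.
  by rewrite lhs_uniform // rhs_Delta //; split => /RltP.
rewrite minimizer_singletonsP // unique_minimizer_singletonsP //.
by split; split=> cmp B /cmp; rewrite ?rhs_le ?rhs_lt.
Qed.
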